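(* Every $\mathcal C$-pair is an augmentation of a basic $\mathcal C$-pair along an acceptable matching.
   Context: $\mathcal C$ is the class of $(P_4,C_4,2P_3)$-free graphs. For a $(P_4,C_4)$-free graph $H$ define a rooted forest $T(H)$ whose nodes are cliques partitioning $V(H)$: if $H$ is disconnected, $T(H)$ is the union of the trees of its components; if $H$ is connected and a clique, $T(H)$ is the single node $V(H)$; otherwise the set $U(H)$ of universal vertices of $H$ is non-empty, and $T(H)$ has root $U(H)$ whose children are the roots of $T(H_1),\dots,T(H_k)$ where $H_1,\dots,H_k$ are the components of $H\setminus U(H)$. A vertex $y$ is a descendant of $x$ if the node containing $y$ is a proper descendant of the node containing $x$. A member $H$ of $\mathcal C$ is basic if every node of $T(H)$ has size 1. A graph $G$ is a $\mathcal C$-pair if $G$ is $P_6$-free and chordal and $V(G)$ is partitioned into sets $X,A$ such that $A$ is a clique, $G[X]\in\mathcal C$, every vertex of $X$ has a neighbor in $A$, and any two non-adjacent vertices of $X$ have no common neighbor in $A$. $G$ is a basic $\mathcal C$-pair if $V(G)=X\cup A$ where $G[X]$ is a basic member of $\mathcal C$ with vertices $x_1,\dots,x_k$, $A=\{a_0,a_1,\dots,a_k\}$ is a clique, and for each $i$: if $x_i$ is simplicial in $G[X]$ then $N_A(x_i)=\{a_i\}$, and otherwise $N_A(x_i)$ is $\{a_i\}$ together with the union of $N_A(y)$ over all descendants $y$ of $x_i$ in $T(G[X])$. In a basic $\mathcal C$-pair a matching $M$ is acceptable if there is a clique $\{x_{i_1},\dots,x_{i_h}\}$ of $G[X]$ with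 $M=\{x_{i_1}a_{i_1},\dots,x_{i_h}a_{i_h}\}$. Two disjoint sets $P,R$ form a graded pair if for any $p,p'\in P$, $N(p)\cap R\subseteq N(p')\cap R$ or $N(p')\cap R\subseteq N(p)\cap R$. Given a graph $H$ and a matching $M$ of $H$, an augmentation of $H$ along $M$ is any graph whose vertex set is partitioned into $|V(H)|$ cliques $Q_v$ ($v\in V(H)$) such that $Q_u$ is complete to $Q_v$ if $uv\in E(H)\setminus M$, there are no edges between $Q_u$ and $Q_v$ if $uv\notin E(H)$, and $\{Q_u,Q_v\}$ is a graded pair if $uv\in M$. *)

(* Finite simple graphs are symmetric irreflexive relations
   e : rel V on a finType V; induced subgraphs G[S] are given by S : {set V}. *)
From HB Require Import structures.
From mathcomp Require Import all_boot.
Set Implicit Arguments. Unset Strict Implicit. Unset Printing Implicit Defensive.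

Section Graphs.
Variable V : finType.
Implicit Types (e : rel V) (S : {set V}).

Definition restr e S : rel V := fun u v => [&& u \in S, v \in S & e u v].
(* vertex set of the component of G[S] containing x (empty if x \notin S) *)
Definition comp e S (x : V) : {set V} := [set y in S | connect (restr e S) x y].
Definition is_clique e S : bool :=
  [forall u in S, [forall v in S, (u != v) ==> e u v]].
Definition univ e S : {set V} := [set u in S | [forall v in S, (v != u) ==> e u v]].

(* descendant relation of T(G[S]) on vertices (fuel-based recursion) *)
Fixpoint tdesc_f e (n : nat) S (x y : V) : bool :=
  if n is n'.+1 then
    let C := comp e S x in
    let U := univ e C in
    [&& x \in S, y \in C, ~~ is_clique e C &
        ((x \in U) && (y \notin U))
        || [&& x \notin U, y \notin U & tdesc_f e n' (C :\: U) x y]]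
  else false.
Definition tdesc e S (x y : V) : bool := tdesc_f e #|S| S x y.

(* the node of T(G[S]) containing x *)
Fixpoint tnode_f e (n : nat) S (x : V) : {set V} :=
  if n is n'.+1 then
    let C := comp e S x in
    if is_clique e C then C else
    let U := univ e C in
    if x \in U then U else tnode_f e n' (C :\: U) x
  else set0.
Definition tnode e S (x : V) : {set V} := tnode_f e #|S| S x.

Definition induced_in {n : nat} (F : rel 'I_n) e S : Prop :=
  exists f : 'I_n -> V,
    [/\ injective f, (forall i, f i \in S) & (forall i j, e (f i) (f j) = F i j)].
Definition free {n : nat} (F : rel 'I_n) e S : Prop := ~ induced_in F e S.

Definition simplicial e S (x : V) : bool := is_clique e [set y in S | e x y].

Definition graded e (P R : {set V}) : Prop :=
  forall p p', p \in P -> p' \in P ->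
    [set r in R | e p r] \subset [set r in R | e p' r]
    \/ [set r in R | e p' r] \subset [set r in R | e p r].
End Graphs.

Definition path_rel (n : nat) : rel 'I_n :=
  fun i j => (i.+1 == j :> nat) || (j.+1 == i :> nat).
Definition cycle_rel (n : nat) : rel 'I_n :=
  fun i j => [|| path_rel i j,
                 (i == 0 :> nat) && (j == n.-1 :> nat)
               | (j == 0 :> nat) && (i == n.-1 :> nat)].
(* 2P3 : vertices 0-1-2 and 3-4-5 *)
Definition twoP3_rel : rel 'I_6 :=
  fun i j => path_rel i j &&
             ~~ (((i == 2 :> nat) && (j == 3 :> nat)) || ((i == 3 :> nat) && (j == 2 :> nat))).

Section Pairs.
Variable V : finType.
Implicit Types (e : rel V) (S : {set V}).

Definition inC e S : Prop :=
  [/\ free (@path_rel 4) e S, free (@cycle_rel 4) e S & free twoP3_rel e S].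
Definition basic_member e S : Prop :=
  inC e S /\ (forall x, x \in S -> #|tnode e S x| = 1).
Definition P6free e : Prop := free (@path_rel 6) e setT.
Definition chordal e : Prop := forall n, 4 <= n -> free (@cycle_rel n) e setT.

Definition is_graph e : Prop := symmetric e /\ irreflexive e.

Definition C_pair e (X A : {set V}) : Prop :=
  [/\ [/\ A = ~: X, is_clique e A & inC e X],
      (forall x, x \in X -> exists2 a, a \in A & e x a),
      (forall x y, x \in X -> y \in X -> x != y -> ~~ e x y ->
         forall a, a \in A -> ~~ (e x a && e y a)),
      P6free e & chordal e].
End Pairs.

(* H = (W, eH) is a basic C-pair with X = {xs i}, A = {a0} U {as_ i},
   where xs i plays x_{i+1} and as_ i plays a_{i+1}. *)
Definition basic_C_pair (W : finType) (eH : rel W) (k : nat)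
    (xs : 'I_k -> W) (a0 : W) (as_ : 'I_k -> W) : Prop :=
  let X := [set xs i | i : 'I_k] in
  let A := a0 |: [set as_ i | i : 'I_k] in
  [/\ is_graph eH /\ (forall w, w \in X :|: A),
      [/\ injective xs, injective as_, (forall i j, xs i != as_ j),
          (forall i, xs i != a0) & (forall i, as_ i != a0)],
      basic_member eH X,
      is_clique eH A &
      (forall i, [set b in A | eH (xs i) b] =
         if simplicial eH X (xs i) then [set as_ i]
         else as_ i |: \bigcup_(j | tdesc eH X (xs i) (xs j)) [set b in A | eH (xs j) b])].

Definition match_rel (W : finType) (k : nat) (xs as_ : 'I_k -> W) (I : {set 'I_k}) : rel W :=
  fun u v => [exists i in I, ((u == xs i) && (v == as_ i)) || ((v == xs i) && (u == as_ i))].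

Definition acceptable (W : finType) (eH : rel W) (k : nat) (xs : 'I_k -> W) (I : {set 'I_k}) : bool :=
  is_clique eH [set xs i | i in I].

(* G = (V, e) is an augmentation of H = (W, eH) along the matching M, via the
   partition of V into the cliques Q_w = q^-1(w) (possibly empty). *)
Definition augmentation (V W : finType) (e : rel V) (eH : rel W) (M : rel W) (q : V -> W) : Prop :=
  [/\ (forall u v, u != v -> q u = q v -> e u v),
      (forall u v, q u != q v -> eH (q u) (q v) -> ~~ M (q u) (q v) -> e u v),
      (forall u v, q u != q v -> ~~ eH (q u) (q v) -> ~~ e u v) &
      (forall u' v', M u' v' -> graded e [set v | q v == u'] [set v | q v == v'])].

(* In a (P4, C4)-free graph adjacent vertices have nested closed neighbourhoods,
   so the tree T(H) is described by neighbourhoods alone: y is a descendant of x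
   iff xy is an edge and N[y] is strictly contained in N[x], and the nodes of T(H)
   are the classes of closed twins.  Given a C-pair (X, A), contract every twin
   class of G[X] to a vertex x_i; this gives a basic member of C.  Map a vertex
   a of A with a neighbour in X to a_i, where x_i is the class of the anchor of
   a, its X-neighbour with the smallest closed neighbourhood, and map the other
   vertices of A to a_0.  Excluding induced C4 and C5 forces a to be adjacent to
   every ancestor of its anchor, so this map is an augmentation in which only
   the pairs x_i a_i can fail to be complete; P6-freeness makes the indices of
   these pairs a clique, and C4-freeness makes every pair of cliques graded. *)

From Pilot Require Import Defs.
From HB Require Import structures.
From mathcomp Require Import all_boot.
Set Implicit Arguments. Unset Strict Implicit. Unset Printing Implicit Defensive.

(* [all_boot] exports the function composition [comp] of ssrfun, which shadows
   the connected components of [Defs]. *)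
Local Notation comp := Defs.comp.

Section SimpleGraph.
Variables (T : finType) (r : rel T).
Hypotheses (rsym : symmetric r) (rirr : irreflexive r).
Implicit Types (S C U : {set T}) (a b c d f g u v w x y : T).

Lemma induced_in_seq n (F : rel 'I_n) S (s : seq T) x0 :
  size s = n -> uniq s -> {subset s <= S} ->
  (forall i j : 'I_n, r (nth x0 s i) (nth x0 s j) = F i j) -> induced_in F r S.
Proof.
move=> size_s uniq_s sS adj; exists (fun i => nth x0 s i); split=> //.
- by move=> i j /eqP; rewrite nth_uniq ?size_s // => /eqP/val_inj.
- by move=> i; rewrite sS ?mem_nth ?size_s.
Qed.

(* [induced_by s] shows that the listed vertices [s] induce the pattern: two of
   them cannot coincide since identifying them contradicts the adjacency
   hypotheses, and the adjacency table is then checked entry by entry. *)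
Local Ltac clash := match goal with
  | H : is_true (?x != ?x) |- _ => by rewrite eqxx in H
  | H : is_true (r ?x ?x) |- _ => by rewrite rirr in H
  | H : is_true (r ?x ?y), H' : is_true (~~ r ?x ?y) |- _ => by rewrite H in H'
  | H : is_true (r ?y ?x), H' : is_true (~~ r ?x ?y) |- _ => by rewrite rsym H in H'
  end.

Local Ltac adjacency := match goal with
  | |- r ?x ?x = false => exact: rirr
  | H : is_true (r ?x ?y) |- r ?x ?y = true => exact: H
  | H : is_true (r ?y ?x) |- r ?x ?y = true => by rewrite rsym
  | H : is_true (~~ r ?x ?y) |- r ?x ?y = false => exact: negbTE H
  | H : is_true (~~ r ?y ?x) |- r ?x ?y = false => by rewrite rsym (negbTE H)
  end.

Local Ltac induced_by s :=
  let x0 := lazymatch s with ?x :: _ => x end in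
  apply: (@induced_in_seq _ _ _ s x0) => //;
  [ rewrite /= !inE !negb_or /= ?andbT; do ![apply/andP; split]; apply/eqP => E; subst; clash
  | case=> [[|[|[|[|[|[|[|?]]]]]]] ?] //; case=> [[|[|[|[|[|[|[|?]]]]]]] ?] //;
    rewrite /cycle_rel /path_rel /= ?eqE /=; adjacency ].

Lemma induced_P4 S a b c d : {subset [:: a; b; c; d] <= S} ->
  r a b -> r b c -> r c d -> ~~ r a c -> ~~ r a d -> ~~ r b d ->
  induced_in (@path_rel 4) r S.
Proof. by move=> *; induced_by [:: a; b; c; d]. Qed.

(* Opposite vertices of a C4 have the same neighbours, so their distinctness
   must be assumed. *)
Lemma induced_C4 S a b c d : {subset [:: a; b; c; d] <= S} -> a != c -> b != d ->
  r a b -> r b c -> r c d -> r d a -> ~~ r a c -> ~~ r b d ->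
  induced_in (@cycle_rel 4) r S.
Proof. by move=> *; induced_by [:: a; b; c; d]. Qed.

Lemma induced_C5 S a b c d f : {subset [:: a; b; c; d; f] <= S} ->
  r a b -> r b c -> r c d -> r d f -> r f a ->
  ~~ r a c -> ~~ r a d -> ~~ r b d -> ~~ r b f -> ~~ r c f ->
  induced_in (@cycle_rel 5) r S.
Proof. by move=> *; induced_by [:: a; b; c; d; f]. Qed.

Lemma induced_P6 S a b c d f g : {subset [:: a; b; c; d; f; g] <= S} ->
  r a b -> r b c -> r c d -> r d f -> r f g ->
  ~~ r a c -> ~~ r a d -> ~~ r a f -> ~~ r a g -> ~~ r b d ->
  ~~ r b f -> ~~ r b g -> ~~ r c f -> ~~ r c g -> ~~ r d g ->
  induced_in (@path_rel 6) r S.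
Proof. by move=> *; induced_by [:: a; b; c; d; f; g]. Qed.

(** * Closed neighbourhoods in (P4, C4)-free graphs *)

Definition cnbr S x : {set T} := [set y in S | (y == x) || r x y].

Definition nested S := forall x y, x \in S -> y \in S -> r x y ->
  cnbr S x \subset cnbr S y \/ cnbr S y \subset cnbr S x.

Definition twin_free S := {in S &, injective (cnbr S)}.

Lemma cnbr_id S x : x \in S -> x \in cnbr S x.
Proof. by move=> xS; rewrite inE xS eqxx. Qed.

Lemma cnbr_sub S x : cnbr S x \subset S.
Proof. by apply/subsetP=> y; rewrite inE => /andP[]. Qed.

Lemma cnbr_adj S x y : y \in S -> y != x -> (y \in cnbr S x) = r x y.
Proof. by move=> yS /negbTE yx; rewrite inE yS yx. Qed.

Lemma cnbr_edge S x y : y \in S -> r x y -> y \in cnbr S x.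
Proof. by move=> yS rxy; rewrite inE yS rxy orbT. Qed.

Lemma cnbr_sym S x y : x \in S -> y \in S -> (y \in cnbr S x) = (x \in cnbr S y).
Proof. by move=> xS yS; rewrite !inE xS yS eq_sym rsym. Qed.

Lemma cnbr_subset S S' x : S' \subset S -> cnbr S' x = cnbr S x :&: S'.
Proof.
move=> sS'S; apply/setP=> y; rewrite !inE.
by have [yS'|] := boolP (y \in S'); rewrite ?andbF // (subsetP sS'S _ yS') andbT.
Qed.

Lemma cnbr_setD S U x : cnbr (S :\: U) x = cnbr S x :\: U.
Proof. by apply/setP=> y; rewrite !inE; case: (y \in U). Qed.

Lemma clique_adj S u v : is_clique r S -> u \in S -> v \in S -> u != v -> r u v.
Proof.
move=> /forallP/(_ u)/implyP Scl uS vS uv.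
by move/forallP/(_ v): (Scl uS); rewrite vS uv.
Qed.

Lemma cnbr_clique S x : is_clique r S -> x \in S -> cnbr S x = S.
Proof.
move=> Scl xS; apply/setP=> y; rewrite inE andb_idr // => yS.
by have [//|yx] := eqVneq y x; rewrite /= (clique_adj Scl) // eq_sym.
Qed.

Lemma nested_sub S S' : S' \subset S -> nested S -> nested S'.
Proof.
move=> sS'S nS x y xS' yS' rxy; rewrite !(cnbr_subset _ sS'S).
by case: (nS x y (subsetP sS'S _ xS') (subsetP sS'S _ yS') rxy) => h;
  [left | right]; apply: setSI.
Qed.

Lemma nested_of_free S :
  free (@path_rel 4) r S -> free (@cycle_rel 4) r S -> nested S.
Proof.
move=> noP4 noC4 x y xS yS rxy.
have [|/subsetPn[u uNx uNy]] := boolP (cnbr S x \subset cnbr S y); first by left.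
have [|/subsetPn[w wNy wNx]] := boolP (cnbr S y \subset cnbr S x); first by right.
exfalso; have uS := subsetP (cnbr_sub S x) _ uNx; have wS := subsetP (cnbr_sub S y) _ wNy.
have ux : u != x by apply: contraNneq uNy => ->; rewrite inE xS rsym rxy orbT.
have wy : w != y by apply: contraNneq wNx => ->; rewrite inE yS rxy orbT.
have uy : u != y by apply: contraNneq uNy => ->; apply: cnbr_id.
have wx : w != x by apply: contraNneq wNx => ->; apply: cnbr_id.
rewrite cnbr_adj // in uNx; rewrite cnbr_adj // in uNy.
rewrite cnbr_adj // in wNx; rewrite cnbr_adj // in wNy.
have memS : {subset [:: u; x; y; w] <= S} by move=> z; rewrite !inE => /or4P[] /eqP->.
have rux : r u x by rewrite rsym.
have nruy : ~~ r u y by rewrite rsym.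
have [rwu|nrwu] := boolP (r w u).
- by apply: noC4; apply: (induced_C4 memS); rewrite // eq_sym.
- by apply: noP4; apply: (induced_P4 memS); rewrite // rsym.
Qed.

Lemma comp_sub S x : comp r S x \subset S.
Proof. by apply/subsetP=> y; rewrite inE => /andP[]. Qed.

Lemma comp_id S x : x \in S -> x \in comp r S x.
Proof. by move=> xS; rewrite inE xS connect0. Qed.

Lemma comp_closed S x u v : u \in comp r S x -> v \in S -> r u v -> v \in comp r S x.
Proof.
rewrite !inE => /andP[uS xu] vS ruv; rewrite vS.
by apply: connect_trans xu (connect1 _); rewrite /restr uS vS ruv.
Qed.

Lemma comp_connect S x u v : u \in comp r S x -> v \in comp r S x ->
  connect (restr r S) u v.
Proof.
have restr_sym : symmetric (restr r S) by move=> y z; rewrite /restr andbCA rsym.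
rewrite !inE => /andP[_ xu] /andP[_ xv]; apply: connect_trans xv.
by rewrite (sym_connect_sym restr_sym).
Qed.

Lemma cnbr_comp S x v : v \in comp r S x -> cnbr S v = cnbr (comp r S x) v.
Proof.
move=> vC; rewrite (cnbr_subset _ (comp_sub S x)); apply/esym/setIidPl/subsetP=> y.
by rewrite inE => /andP[yS /predU1P[->|/(comp_closed vC yS)]].
Qed.

Lemma univ_cnbr C v : (v \in univ r C) = (v \in C) && (cnbr C v == C).
Proof.
rewrite inE; apply: andb_id2l => vC; apply/forallP/eqP => [vU|NvC].
  apply/setP=> y; rewrite inE andb_idr // => yC.
  by have [//|yv] := eqVneq y v; apply: (implyP (implyP (vU y) yC)).
move=> y; apply/implyP=> yC; apply/implyP=> yv.
by rewrite -(cnbr_adj (S := C)) // NvC.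
Qed.

Lemma univ_sub_cnbr C u v : u \in univ r C -> v \in C -> u \in cnbr C v.
Proof.
move=> uU vC; rewrite cnbr_sym //; last by move: uU; rewrite univ_cnbr => /andP[].
by move: uU; rewrite univ_cnbr => /andP[_ /eqP->].
Qed.

Lemma connect_exit (e : rel T) (A : {set T}) x y : connect e x y -> x \in A -> y \notin A ->
  exists u v, [/\ u \in A, v \notin A & e u v].
Proof.
case/connectP=> p; elim: p x => [|z p IHp] x /=; first by move=> _ -> ->.
case/andP=> exz pz ylast xA yNA.
by have [zA|zNA] := boolP (z \in A); [apply: IHp pz ylast zA yNA | exists x, z].
Qed.

(* A vertex with a maximal closed neighbourhood is universal in its component:
   otherwise a path leaving that neighbourhood would reach a vertex whose closed
   neighbourhood strictly contains it. *)
Lemma univ_comp_exists S x : nested S -> x \in S -> exists u, u \in univ r (comp r S x).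
Proof.
move=> nS xS; set C := comp r S x.
have CS : C \subset S := comp_sub S x.
have [u uC' umax] := arg_maxnP (fun u => #|cnbr S u|) (comp_id xS).
have uC : u \in C := uC'.
exists u; rewrite /univ in_set uC; apply/forallP=> v; apply/implyP=> vC; apply/implyP=> vu.
apply/negPn/negP=> nruv.
have vNu : v \notin cnbr S u by rewrite cnbr_adj ?(subsetP CS).
have [a [b [aNu bNu /and3P[aS bS rab]]]] :=
  connect_exit (comp_connect uC vC) (cnbr_id (subsetP CS _ uC)) vNu.
have bNa : b \in cnbr S a by apply: cnbr_edge.
have au : a != u by apply: contraNneq bNu => <-.
have rua : r u a by rewrite -(cnbr_adj (S := S)).
have : cnbr S u \proper cnbr S a.
  case: (nS u a (subsetP CS _ uC) aS rua) => [Nua|/subsetP/(_ b bNa)].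
    by apply/properP; split=> //; exists b.
  by rewrite (negbTE bNu).
by move/proper_card/leq_trans/(_ (umax a (comp_closed uC aS rua))); rewrite ltnn.
Qed.

(** * The tree T(H) of a (P4, C4)-free graph *)

Lemma setD2r_subset (A B U : {set T}) :
  U \subset B -> (A :\: U \subset B :\: U) = (A \subset B).
Proof.
move=> UB; apply/idP/idP => [sABU|]; last exact: setSD.
apply/subsetP=> y yA; have [/(subsetP UB)//|yNU] := boolP (y \in U).
by have /(_ y) := subsetP sABU; rewrite !inE yNU yA => /(_ isT)/andP[].
Qed.

Lemma univ_subset_cnbr C v : v \in C -> univ r C \subset cnbr C v.
Proof. by move=> vC; apply/subsetP=> u /univ_sub_cnbr; apply. Qed.

(* Below its root [univ r C], the tree of a component [C] continues with the
   components of [C :\: univ r C]. *)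
Lemma cnbr_peel_proper C v w : v \in C -> w \in C ->
  (cnbr (C :\: univ r C) v \proper cnbr (C :\: univ r C) w) = (cnbr C v \proper cnbr C w).
Proof. by move=> vC wC; rewrite !cnbr_setD !properE !setD2r_subset ?univ_subset_cnbr. Qed.

Lemma cnbr_peel_eq C v w : v \in C -> w \in C ->
  (cnbr (C :\: univ r C) v == cnbr (C :\: univ r C) w) = (cnbr C v == cnbr C w).
Proof. by move=> vC wC; rewrite !cnbr_setD !eqEsubset !setD2r_subset ?univ_subset_cnbr. Qed.

Lemma card_peel S x : nested S -> x \in S ->
  #|comp r S x :\: univ r (comp r S x)| < #|S|.
Proof.
move=> nS xS; have [u uU] := univ_comp_exists nS xS.
have uC : u \in comp r S x by move: uU; rewrite univ_cnbr => /andP[].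
apply: leq_trans (proper_card _) (subset_leq_card (comp_sub S x)).
by apply/properP; split; [exact: subsetDl | exists u; rewrite // in_setD uU].
Qed.

Lemma nested_peel S x : nested S -> nested (comp r S x :\: univ r (comp r S x)).
Proof. by apply: nested_sub; apply: subset_trans (subsetDl _ _) (comp_sub S x). Qed.

Lemma twin_free_peel S x : twin_free S -> twin_free (comp r S x :\: univ r (comp r S x)).
Proof.
move=> tfS y z /setDP[yC _] /setDP[zC _] /eqP.
rewrite cnbr_peel_eq // -!cnbr_comp // => /eqP; apply: tfS.
all: exact: subsetP (comp_sub S x) _ _.
Qed.

Lemma tdesc_fE n S x y : #|S| <= n -> nested S ->
  tdesc_f r n S x y = [&& x \in S, y \in S, r x y & cnbr S y \proper cnbr S x].
Proof.
elim: n S => [|n IHn] S leSn nS.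
  by move: leSn; rewrite leqn0 cards_eq0 => /eqP->; rewrite inE.
rewrite /=; have [xS|//] := boolP (x \in S).
set C := comp r S x; set U := univ r C.
have xC : x \in C := comp_id xS.
have [yC|yNC] := boolP (y \in C); last first.
  by apply/esym/and4P => -[_ yS rxy _]; rewrite (comp_closed xC yS rxy) in yNC.
rewrite (subsetP (comp_sub S x) _ yC) (cnbr_comp yC) (cnbr_comp xC) -/C /=.
have [Ccl|_] /= := boolP (is_clique r C); first by rewrite !cnbr_clique // properxx andbF.
have leCUn : #|C :\: U| <= n by rewrite -ltnS (leq_trans (card_peel nS xS)).
rewrite IHn //; last exact: nested_peel.
rewrite !in_setD xC yC !andbT cnbr_peel_proper //.
have univE v : v \in C -> (v \in U) = (cnbr C v == C) by move=> vC; rewrite univ_cnbr vC.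
have [xU|xNU] := boolP (x \in U); have [yU|yNU] := boolP (y \in U) => //=.
- by move: xU yU; rewrite !univE // => /eqP-> /eqP->; rewrite properxx andbF.
- have yx : y != x by apply: contraNneq yNU => ->.
  move: xU yNU; rewrite !univE // => /eqP NxC NyC.
  by rewrite -(cnbr_adj (S := C)) // NxC yC properEneq NyC cnbr_sub.
- by move: yU; rewrite univE // => /eqP->; rewrite properE cnbr_sub /= !andbF.
Qed.

Lemma tdescE S x y : nested S ->
  tdesc r S x y = [&& x \in S, y \in S, r x y & cnbr S y \proper cnbr S x].
Proof. exact: tdesc_fE. Qed.

Lemma tnode_fE n S x : #|S| <= n -> nested S -> twin_free S -> x \in S ->
  tnode_f r n S x = [set x].
Proof.
elim: n S => [|n IHn] S leSn nS tfS xS.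
  by move: leSn; rewrite leqn0 cards_eq0 => /eqP S0; rewrite S0 inE in xS.
rewrite /=; set C := comp r S x; set U := univ r C.
have xC : x \in C := comp_id xS.
have twinC y : y \in C -> cnbr C y = cnbr C x -> y = x.
  by move=> yC; rewrite -!cnbr_comp //; apply: tfS; apply: (subsetP (comp_sub S x)).
have [Ccl|_] := boolP (is_clique r C).
  apply/setP=> y; rewrite in_set1; apply/idP/eqP=> [yC|->//].
  by apply: twinC; rewrite ?cnbr_clique.
have [xU|xNU] := boolP (x \in U).
  apply/setP=> y; rewrite in_set1; apply/idP/eqP=> [yU|->//].
  move: yU xU; rewrite !univ_cnbr => /andP[yC /eqP NyC] /andP[_ /eqP NxC].
  by apply: twinC; rewrite // NyC NxC.
apply: IHn; [|exact: nested_peel|exact: twin_free_peel|by rewrite in_setD xNU].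
by rewrite -ltnS (leq_trans (card_peel nS xS)).
Qed.

Lemma tnodeE S x : nested S -> twin_free S -> x \in S -> tnode r S x = [set x].
Proof. exact: tnode_fE. Qed.

Lemma desc_not_simplicial S x y : x \in S -> y \in S -> r x y ->
  cnbr S y \proper cnbr S x -> ~~ simplicial r S x.
Proof.
move=> xS yS rxy /properP[_ [z zNx zNy]].
have zS : z \in S := subsetP (cnbr_sub S x) _ zNx.
have zx : z != x by apply: contraNneq zNy => ->; rewrite cnbr_edge // rsym.
have yz : y != z by apply: contraNneq zNy => <-; apply: cnbr_id.
rewrite cnbr_adj // in zNx; rewrite cnbr_adj // 1?eq_sym // in zNy.
apply/forallP => /(_ y); rewrite inE yS rxy => /forallP/(_ z).
by rewrite inE zS zNx yz (negbTE zNy).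
Qed.

Lemma graded_cliques P Q : free (@cycle_rel 4) r setT ->
  is_clique r P -> is_clique r Q -> [disjoint P & Q] -> graded r P Q.
Proof.
move=> noC4 Pcl Qcl PQ p p' pP p'P.
have [->|pp'] := eqVneq p p'; first by left.
have [|/subsetPn[x]] := boolP ([set y in Q | r p y] \subset [set y in Q | r p' y]).
  by left.
rewrite !inE => /andP[xQ rpx]; rewrite xQ /= => nrp'x.
right; apply/subsetP=> y; rewrite !inE => /andP[yQ rp'y]; rewrite yQ /=.
apply/negPn/negP=> nrpy; apply: noC4.
have xy : x != y by apply: contraNneq nrpy => <-.
have py : p != y by apply: contraTneq yQ => <-; rewrite (disjointFr PQ pP).
have xp' : x != p' by apply: contraTneq xQ => ->; rewrite (disjointFr PQ p'P).
have rxy := clique_adj Qcl xQ yQ xy.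
have rp'p : r p' p by rewrite (clique_adj Pcl) // eq_sym.
have memT : {subset [:: p; x; y; p'] <= setT} by move=> *; rewrite inE.
by apply: (induced_C4 memT); rewrite // rsym.
Qed.

Lemma free_transfer (W : finType) (s : rel W) k (xs : 'I_k -> W) (h : 'I_k -> T)
    S n (F : rel 'I_n) :
  injective h -> (forall i, h i \in S) -> (forall i j, s (xs i) (xs j) = r (h i) (h j)) ->
  free F r S -> free F s [set xs i | i : 'I_k].
Proof.
move=> h_inj hS adj noF [f [f_inj fS fF]]; apply: noF.
have /fin_all_exists[g fE] i : exists j, f i = xs j.
  by case/imsetP: (fS i) => j _ ->; exists j.
exists (h \o g); split=> [i j /h_inj gij | i | i j] /=; last by rewrite -adj -!fE.
- by apply: f_inj; rewrite !fE gij.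
- exact: hS.
Qed.

End SimpleGraph.

(** * The basic C-pair of a C-pair *)

Section Construction.
Variables (V : finType) (e : rel V) (X A : {set V}).
Hypotheses (e_sym : symmetric e) (e_irr : irreflexive e).
Hypotheses (AX : A = ~: X) (Acl : is_clique e A) (XC : inC e X).
Hypothesis A_nbr : forall x, x \in X -> exists2 a, a \in A & e x a.
Hypothesis no_common_A_nbr : forall x y, x \in X -> y \in X -> x != y -> ~~ e x y ->
  forall a, a \in A -> ~~ (e x a && e y a).
Hypotheses (noP6 : P6free e) (chordal_e : chordal e).
Implicit Types (u v w z a p : V).

Local Notation N := (cnbr e X).

Lemma inA v : (v \in A) = (v \notin X).
Proof. by rewrite AX inE. Qed.

Lemma X_A_neq u v : u \in X -> v \in A -> u != v.
Proof. by move=> uX; rewrite inA; apply: contraNneq => <-. Qed.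

Lemma adj_of_common_nbr u v a : u \in X -> v \in X -> a \in A -> u != v ->
  e a u -> e a v -> e u v.
Proof.
move=> uX vX aA uv eau eav; apply/negPn/negP => neuv.
by have := no_common_A_nbr uX vX uv neuv aA; rewrite e_sym eau e_sym eav.
Qed.

Lemma nestedX : nested e X.
Proof. by case: XC => noP4 noC4 _; apply: nested_of_free. Qed.

Lemma twin_adj u v : u \in X -> v \in X -> N u = N v -> u != v -> e u v.
Proof. by move=> uX vX Nuv uv; rewrite -(@cnbr_adj _ e X) 1?eq_sym // Nuv cnbr_id. Qed.

Lemma adj_twins u v u' v' : u \in X -> v \in X -> u' \in X -> v' \in X ->
  N u = N u' -> N v = N v' -> N u != N v -> e u v = e u' v'.
Proof.
move=> uX vX u'X v'X Nu Nv Nuv.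
have neq s t : N s != N t -> t != s by apply: contraNneq => ->.
rewrite -(@cnbr_adj _ e X) ?neq // Nu cnbr_sym // Nv -cnbr_sym // cnbr_adj //.
by rewrite neq // -Nu -Nv.
Qed.

Definition rep v := odflt v [pick u in X | N u == N v].

Lemma rep_spec v : v \in X -> rep v \in X /\ N (rep v) = N v.
Proof.
move=> vX; rewrite /rep; case: pickP => [u /andP[uX /eqP //]|/(_ v)].
by rewrite vX eqxx.
Qed.

Lemma rep_eqE u v : u \in X -> v \in X -> (rep u == rep v) = (N u == N v).
Proof.
move=> uX vX; apply/eqP/eqP => [repuv|Nuv].
  by rewrite -(rep_spec uX).2 -(rep_spec vX).2 repuv.
rewrite /rep Nuv; case: pickP => [//|/(_ u)].
by rewrite uX Nuv eqxx.
Qed.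

Definition R := [set rep v | v in X].
Definition k := #|R|.
Definition idx (i : 'I_k) : V := enum_val i.

Lemma idx_inj : injective idx.
Proof. exact: enum_val_inj. Qed.

Lemma idx_rep i : exists2 v, v \in X & idx i = rep v.
Proof. exact/imsetP/enum_valP. Qed.

Lemma idxX i : idx i \in X.
Proof. by have [v vX ->] := idx_rep i; case: (rep_spec vX). Qed.

Lemma rep_idx i : rep (idx i) = idx i.
Proof.
have [v vX ->] := idx_rep i; have [repX Nrep] := rep_spec vX.
by apply/eqP; rewrite rep_eqE // Nrep.
Qed.

Definition cls v : option 'I_k := [pick i | idx i == rep v].

Lemma clsP v : v \in X -> exists2 i, cls v = Some i & idx i = rep v.
Proof.
move=> vX; rewrite /cls; case: pickP => [i /eqP|none]; first by exists i.
have repR : rep v \in R by apply: imset_f.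
by have := none (enum_rank_in repR (rep v)); rewrite /idx enum_rankK_in ?eqxx.
Qed.

Lemma cnbr_idx i v : v \in X -> idx i = rep v -> N (idx i) = N v.
Proof. by move=> vX ->; case: (rep_spec vX). Qed.

(* By nestedness and [no_common_A_nbr], an [X]-neighbour of [v] with a smallest
   closed neighbourhood lies below all other [X]-neighbours of [v] ([anchorP]). *)
Definition anchor v : option V :=
  if [pick u in X | e v u] is Some u0
  then Some [arg min_(u < u0 | (u \in X) && e v u) #|N u|] else None.

Definition lowest_nbr v w :=
  [/\ w \in X, e v w & forall u, u \in X -> e v u -> N w \subset N u].

Variant anchor_spec v : option V -> Prop :=
  | AnchorNone of (forall u, u \in X -> ~~ e v u) : anchor_spec v None
  | AnchorSome w of lowest_nbr v w : anchor_spec v (Some w).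

Lemma anchorP v : v \in A -> anchor_spec v (anchor v).
Proof.
move=> vA; rewrite /anchor; case: pickP => [u0 /andP[u0X evu0]|none]; last first.
  by constructor=> u uX; move: (none u) => /=; rewrite uX /= => ->.
case: (@arg_minnP _ u0 (fun u => (u \in X) && e v u) (fun u => #|N u|)).
  by rewrite u0X.
move=> w /andP[wX evw] wmin.
constructor; split=> // u uX evu; have [->//|uw] := eqVneq u w.
have ewu : e w u by apply: (adj_of_common_nbr wX uX vA); rewrite 1?eq_sym.
case: (nestedX wX uX ewu) => // Nuw; apply/negP => /negP nNwu.
have : N u \proper N w by rewrite properE Nuw.
by move/proper_card; rewrite ltnNge wmin // uX evu.
Qed.

Definition desc (i j : 'I_k) : bool := e (idx i) (idx j) && (N (idx j) \proper N (idx i)).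

(* The basic pair has vertices [xH i] and [aH i] for x_i and a_i, and [None]
   for a_0; the vertex [xH i] stands for the twin class of [idx i] in G[X]. *)
Local Notation W := (option (bool * 'I_k)).

Definition xH (i : 'I_k) : W := Some (true, i).
Definition aH (i : 'I_k) : W := Some (false, i).
Definition XH : {set W} := [set xH i | i : 'I_k].
Definition AH : {set W} := None |: [set aH i | i : 'I_k].

Definition eH (b c : W) : bool :=
  match b, c with
  | Some (true, i), Some (true, j) => (i != j) && e (idx i) (idx j)
  | Some (true, i), Some (false, j) => (i == j) || desc i j
  | Some (false, i), Some (true, j) => (j == i) || desc j i
  | Some (false, i), Some (false, j) => i != j
  | Some (false, _), None | None, Some (false, _) => true
  | _, _ => false
  end.

Definition q v : W :=
  if v \in X then omap (pair true) (cls v)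
  else if anchor v is Some w then omap (pair false) (cls w) else None.

Variant q_spec v : W -> Prop :=
  | QX i of v \in X & idx i = rep v : q_spec v (xH i)
  | QA0 of v \in A & (forall u, u \in X -> ~~ e v u) : q_spec v None
  | QA i w of v \in A & lowest_nbr v w & idx i = rep w : q_spec v (aH i).

Lemma qP v : q_spec v (q v).
Proof.
rewrite /q; have [vX|vNX] := boolP (v \in X).
  by have [i -> ?] := clsP vX; constructor.
have vA : v \in A by rewrite inA.
case: (anchorP vA) => [noX|w lw]; first exact: QA0.
by have [wX _ _] := lw; have [i -> iw] := clsP wX; apply: (QA vA lw iw).
Qed.

Definition fibre (b : W) : {set V} := [set v | q v == b].

Definition I : {set 'I_k} :=
  [set j | ~~ [forall u in fibre (xH j), forall a in fibre (aH j), e u a]].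

Lemma eH_sym : symmetric eH.
Proof. by move=> [[[] i]|] [[[] j]|] //=; rewrite (eq_sym i j) ?(e_sym (idx i)). Qed.

Lemma eH_irr : irreflexive eH.
Proof. by move=> [[[] i]|] /=; rewrite ?eqxx ?e_irr. Qed.

Lemma xH_inj : injective xH. Proof. by move=> i j []. Qed.
Lemma aH_inj : injective aH. Proof. by move=> i j []. Qed.

Lemma in_XH b : (b \in XH) = (if b is Some (true, _) then true else false).
Proof.
case: b => [[[] i]|]; first exact: imset_f.
all: by apply/imsetP => -[j].
Qed.

Lemma in_AH b : (b \in AH) = (b \notin XH).
Proof.
rewrite in_setU1 in_XH; case: b => [[[] i]|] //=.
- by apply/imsetP => -[j].
- exact: imset_f.
Qed.

Lemma eH_xH i j : eH (xH i) (xH j) = e (idx i) (idx j).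
Proof. by rewrite /=; case: eqVneq => [->|//]; rewrite e_irr. Qed.

Lemma cnbr_twin u v w : u \in X -> v \in X -> w \in X -> N u = N v ->
  (u \in N w) = (v \in N w).
Proof. by move=> uX vX wX Nuv; rewrite !(cnbr_sym e_sym wX) // Nuv. Qed.

Lemma cnbrH_xH i j : (xH j \in cnbr eH XH (xH i)) = (idx j \in N (idx i)).
Proof. by rewrite !inE in_XH idxX eH_xH (inj_eq xH_inj) (inj_eq idx_inj). Qed.

Lemma cnbrH_subset i j :
  (cnbr eH XH (xH i) \subset cnbr eH XH (xH j)) = (N (idx i) \subset N (idx j)).
Proof.
apply/subsetP/subsetP => sub v.
  move=> vNi; have vX := subsetP (cnbr_sub e X _) _ vNi.
  have [l _ lv] := clsP vX; have Nl := cnbr_idx vX lv.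
  have lE w : w \in X -> (idx l \in N w) = (v \in N w).
    by move=> wX; apply: cnbr_twin; rewrite ?idxX.
  by rewrite -lE ?idxX // -cnbrH_xH sub // cnbrH_xH lE ?idxX.
move=> vNi; have /imsetP[l _ vE] := subsetP (cnbr_sub eH XH _) _ vNi.
by move: vNi; rewrite vE !cnbrH_xH; apply: sub.
Qed.

Lemma inC_H : inC eH XH.
Proof. by case: XC => *; split; apply: (free_transfer idx_inj idxX eH_xH). Qed.

Lemma nested_H : nested eH XH.
Proof. by case: inC_H => noP4 noC4 _; apply: (nested_of_free eH_sym eH_irr). Qed.

Lemma tdescH i j : tdesc eH XH (xH i) (xH j) = desc i j.
Proof.
by rewrite (tdescE eH_sym _ _ nested_H) !in_XH eH_xH /desc !properE !cnbrH_subset.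
Qed.

Lemma basic_H : basic_member eH XH.
Proof.
split=> [|_ /imsetP[i _ ->]]; first exact: inC_H.
rewrite (tnodeE eH_sym nested_H) ?in_XH ?cards1 //.
move=> _ _ /imsetP[a _ ->] /imsetP[b _ ->] /eqP.
rewrite eqEsubset !cnbrH_subset -eqEsubset -rep_eqE ?idxX // !rep_idx.
by move/eqP/idx_inj->.
Qed.

Lemma desc_trans i j l : desc i j -> desc j l -> desc i l.
Proof.
case/andP=> _ Nji /andP[_ Nlj]; have Nli := proper_trans Nlj Nji.
rewrite /desc Nli andbT -(@cnbr_adj _ e X) ?idxX //.
  exact/(subsetP (proper_sub Nli))/cnbr_id/idxX.
by apply: contraTneq Nli => ->; rewrite properxx.
Qed.

Lemma desc_not_simplicial_H i j : desc i j -> ~~ simplicial eH XH (xH i).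
Proof.
rewrite -tdescH (tdescE eH_sym _ _ nested_H) => /and4P[].
exact: (desc_not_simplicial eH_sym).
Qed.

Lemma nbrAH_xH i b : (b \in [set c in AH | eH (xH i) c]) =
  (if b is Some (false, l) then (i == l) || desc i l else false).
Proof. by rewrite inE in_AH in_XH; case: b => [[[] l]|]. Qed.

Lemma nbrAH_formula i : [set b in AH | eH (xH i) b] =
  if simplicial eH XH (xH i) then [set aH i]
  else aH i |: \bigcup_(j | tdesc eH XH (xH i) (xH j)) [set b in AH | eH (xH j) b].
Proof.
apply/setP=> b; rewrite nbrAH_xH; case: ifP => simpl_i.
  rewrite in_set1; case: b => [[[] l]|] //; rewrite (inj_eq aH_inj) eq_sym.
  by case: (boolP (desc i l)) => [/desc_not_simplicial_H|]; rewrite ?simpl_i ?orbF.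
rewrite in_setU1; case: b => [[[] l]|].
- by apply/esym/negP => /orP[//|/bigcupP[j _]]; rewrite nbrAH_xH.
- rewrite (inj_eq aH_inj) eq_sym; apply/idP/idP.
    case/orP => [->//|il]; apply/orP; right; apply/bigcupP; exists l.
      by rewrite tdescH.
    by rewrite nbrAH_xH eqxx.
  case/orP => [->//|/bigcupP[j]]; rewrite tdescH nbrAH_xH => ij /orP[/eqP <-|jl].
    by rewrite ij orbT.
  by rewrite (desc_trans ij jl) orbT.
- by apply/esym/negP => /orP[//|/bigcupP[j _]]; rewrite nbrAH_xH.
Qed.


Lemma AH_clique : is_clique eH AH.
Proof.
apply/forallP=> b; apply/implyP; rewrite in_AH in_XH => bA.
apply/forallP=> c; apply/implyP; rewrite in_AH in_XH => cA; apply/implyP.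
by case: b c bA cA => [[[] i]|] [[[] j]|].
Qed.

Lemma basic_C_pair_H : basic_C_pair eH xH None aH.
Proof.
split=> //.
- by split=> [|b]; [split; [exact: eH_sym | exact: eH_irr] | rewrite in_setU in_AH orbN].
- by split=> //; [exact: xH_inj | exact: aH_inj].
- exact: basic_H.
- exact: AH_clique.
- exact: nbrAH_formula.
Qed.

Lemma cnbr_idx_eq i j : (N (idx i) == N (idx j)) = (i == j).
Proof. by rewrite -rep_eqE ?idxX // !rep_idx (inj_eq idx_inj). Qed.

Lemma adj_idx i j u v : u \in X -> v \in X -> idx i = rep u -> idx j = rep v -> i != j ->
  e (idx i) (idx j) = e u v.
Proof.
move=> uX vX ui vj ij; apply: adj_twins; rewrite ?idxX ?cnbr_idx_eq //.
- exact: cnbr_idx.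
- exact: cnbr_idx.
Qed.

Lemma q_X u : u \in X -> exists2 i, q u = xH i & idx i = rep u.
Proof. by move=> uX; rewrite /q uX; have [i -> ui] := clsP uX; exists i. Qed.

(** * Acceptability and augmentation *)

Lemma memI j : reflect (exists u a, [/\ q u = xH j, q a = aH j & ~~ e u a]) (j \in I).
Proof.
rewrite inE; apply: (iffP forall_inPn) => [[u uQ /forall_inPn[a aQ neua]]|].
  by exists u, a; rewrite !inE in uQ aQ; split=> //; apply/eqP.
case=> u [a [qu qa neua]].
by exists u; rewrite ?inE ?qu //; apply/forall_inPn; exists a; rewrite ?inE ?qa.
Qed.

Lemma q_xH u i : q u = xH i -> u \in X /\ idx i = rep u.
Proof. by case: qP => // j uX uj [<-]. Qed.

Lemma q_aH v j : q v = aH j -> v \in A /\ exists2 w, lowest_nbr v w & idx j = rep w.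
Proof. by case: qP => // j' w vA lw jw [<-]; split=> //; exists w. Qed.

(* Otherwise p - w - a - b - w' - p' would be an induced P6. *)
Lemma no_crossing a b w w' p p' : a \in A -> b \in A ->
  w \in X -> w' \in X -> p \in X -> p' \in X -> N p = N w -> N p' = N w' ->
  w != w' -> ~~ e w w' -> e a w -> e b w' -> ~~ e a p -> ~~ e b p' -> False.
Proof.
move=> aA bA wX w'X pX p'X Np Np' ww' nww' eaw ebw' nap nbp'.
have Nww' : N w != N w' by apply: contra nww' => /eqP Nw; apply: twin_adj.
have ab : a != b.
  by apply: contraNneq nww' => ab; apply: (adj_of_common_nbr wX w'X aA); rewrite // ab.
have epw : e p w by apply: twin_adj; rewrite //; apply: contraNneq nap => ->.
have ew'p' : e w' p' by apply: twin_adj; rewrite // eq_sym; apply: contraNneq nbp' => ->.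
have eab := clique_adj Acl aA bA ab.
have neqN s t : N s != N t -> s != t by apply: contraNneq => ->.
have pw' : p != w' by rewrite neqN // Np.
have wp' : w != p' by rewrite neqN // Np'.
have npw' : ~~ e p w' by rewrite (adj_twins pX w'X wX w'X) // Np.
have nwp' : ~~ e w p' by rewrite (adj_twins wX p'X wX w'X) // Np'.
have npp' : ~~ e p p' by rewrite (adj_twins pX p'X wX w'X) // Np Np'.
have nbw : ~~ e b w by apply: contra nww' => ?; apply: (adj_of_common_nbr wX w'X bA).
have naw' : ~~ e a w' by apply: contra nww' => ?; apply: (adj_of_common_nbr wX w'X aA).
have nbp : ~~ e b p by apply: contra npw' => ?; apply: (adj_of_common_nbr pX w'X bA).
have nap' : ~~ e a p' by apply: contra nwp' => ?; apply: (adj_of_common_nbr wX p'X aA).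
have memT : {subset [:: p; w; a; b; w'; p'] <= setT} by move=> *; rewrite inE.
by apply: noP6; apply: (induced_P6 e_sym e_irr memT); rewrite // e_sym.
Qed.

Lemma acceptable_I : acceptable eH xH I.
Proof.
apply/forallP=> x; apply/implyP=> /imsetP[i /memI[u [a [qu qa neua]]] ->].
apply/forallP=> y; apply/implyP=> /imsetP[j /memI[u' [b [qu' qb neu'b]]] ->].
apply/implyP; rewrite (inj_eq xH_inj) eH_xH => ij; apply/negPn/negP => neij.
have [[uX ui] [u'X u'j]] := (q_xH qu, q_xH qu').
have [[aA [w [wX eaw _] iw]] [bA [w' [w'X ebw' _] jw']]] := (q_aH qa, q_aH qb).
rewrite e_sym in neua; rewrite e_sym in neu'b.
apply: (no_crossing aA bA wX w'X uX u'X _ _ _ _ eaw ebw' neua neu'b).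
- by rewrite -(cnbr_idx uX ui) (cnbr_idx wX iw).
- by rewrite -(cnbr_idx u'X u'j) (cnbr_idx w'X jw').
- by apply: contraNneq ij => ww'; rewrite -(inj_eq idx_inj) iw jw' ww'.
- by rewrite -(adj_idx wX w'X iw jw' ij).
Qed.

(* If [e v u] failed, a vertex [z] of [N u] outside [N w] would close an induced
   C4 or C5 through [v], [w], [u] and an [A]-neighbour [b] of [z]. *)
Lemma lowest_nbr_adj_above v w u : v \in A -> lowest_nbr v w ->
  u \in X -> e u w -> N w \proper N u -> e v u.
Proof.
move=> vA [wX evw wmin] uX euw /properP[_ [z zNu zNw]]; apply/negPn/negP => nevu.
have zX := subsetP (cnbr_sub e X u) _ zNu.
have zu : z != u by apply: contraNneq zNw => ->; rewrite cnbr_edge // e_sym.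
have zw : z != w by apply: contraNneq zNw => ->; apply: cnbr_id.
rewrite cnbr_adj // in zNu; rewrite cnbr_adj // in zNw.
have nevz : ~~ e v z.
  apply: contra zNw => /(wmin z zX)/subsetP/(_ w (cnbr_id e wX)).
  by rewrite cnbr_adj 1?eq_sym // e_sym.
have [b bA ezb] := A_nbr zX.
have evb : e v b by apply: (clique_adj Acl) => //; apply: contraNneq nevz => ->; rewrite e_sym.
have newb : ~~ e w b.
  by apply: contra zNw => ?; apply: (adj_of_common_nbr wX zX bA); rewrite 1?e_sym // eq_sym.
have vu : v != u by rewrite eq_sym X_A_neq.
have wb : w != b by rewrite X_A_neq.
have memT (s : seq V) : {subset s <= [set: V]} by move=> *; rewrite inE.
have [eub|neub] := boolP (e u b).
- apply: (chordal_e (leqnn 4)).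
  by apply: (induced_C4 e_sym e_irr (memT [:: v; w; u; b])); rewrite // e_sym.
- apply: (chordal_e (n := 5) isT).
  by apply: (induced_C5 e_sym e_irr (memT [:: v; w; u; z; b])); rewrite // e_sym.
Qed.

Lemma adj_lowest_nbrE v w u : v \in A -> lowest_nbr v w -> u \in X -> N u != N w ->
  e v u = e u w && (N w \proper N u).
Proof.
move=> vA lw uX Nuw; apply/idP/andP => [evu|[euw]]; last exact: lowest_nbr_adj_above.
case: lw => wX evw wmin.
have euw : e u w by apply: (adj_of_common_nbr uX wX vA) => //; apply: contraNneq Nuw => ->.
by rewrite euw properEneq eq_sym Nuw wmin.
Qed.

Lemma descE i j u w : u \in X -> w \in X -> idx i = rep u -> idx j = rep w -> i != j ->
  desc i j = e u w && (N w \proper N u).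
Proof.
by move=> uX wX ui jw ij; rewrite /desc (adj_idx uX wX) // (cnbr_idx uX ui) (cnbr_idx wX jw).
Qed.

Lemma fibre_adj u v : u != v -> q u = q v -> e u v.
Proof.
move=> uv; case: qP => [i uX ui|uA _|i w uA _ _].
- case/esym/q_xH => vX vi; apply: twin_adj => //.
  by rewrite -(cnbr_idx uX ui) (cnbr_idx vX vi).
- by case: qP => // vA _ _; apply: (clique_adj Acl).
- by case/esym/q_aH => vA _; apply: (clique_adj Acl).
Qed.

Lemma fibre_clique b : is_clique e (fibre b).
Proof.
apply/forallP=> u; apply/implyP; rewrite inE => /eqP qu.
apply/forallP=> v; apply/implyP; rewrite inE => /eqP qv.
by apply/implyP => uv; apply: fibre_adj; rewrite // qu qv.
Qed.

Lemma disjoint_fibres b c : b != c -> [disjoint fibre b & fibre c].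
Proof.
move=> bc; rewrite -setI_eq0; apply/eqP/setP=> v; rewrite !inE.
by apply/andP => -[/eqP-> bc']; rewrite bc' in bc.
Qed.

Local Notation M := (match_rel xH aH I).

Lemma match_xH_aH i j : M (xH i) (aH j) = (i == j) && (i \in I).
Proof.
apply/existsP/andP => [[l /andP[lI /orP[/andP[/eqP[->] /eqP[->]]|/andP[/eqP//]]]]|[/eqP-> jI]].
  by rewrite eqxx.
by exists j; rewrite jI !eqxx.
Qed.

Lemma match_sym : symmetric M.
Proof. by move=> b c; apply: eq_existsb => l; rewrite orbC. Qed.

Lemma match_eH b c : M b c -> eH b c.
Proof. by case/existsP=> l /andP[_ /orP[] /andP[/eqP-> /eqP->]] /=; rewrite eqxx. Qed.

Lemma q_AH v : v \in A -> q v \in AH.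
Proof.
move=> vA; case: qP => [i vX _|_ _|i w _ _ _]; rewrite ?in_AH ?in_XH //.
by rewrite inA vX in vA.
Qed.

Lemma adj_X_A u v : u \in X -> v \in A -> ~~ M (q u) (q v) -> e u v = eH (q u) (q v).
Proof.
move=> uX vA; have [i qu ui] := q_X uX; rewrite qu.
case qv: (q v) / (qP v) => [j vX _|_ noX|j w _ lw jw] nM.
- by rewrite inA vX in vA.
- by rewrite e_sym (negbTE (noX u uX)).
- rewrite /=; have [eq_ij|ij] /= := eqVneq i j.
    subst j; rewrite match_xH_aH eqxx /= in nM; apply/negPn/negP => neuv.
    by apply: (negP nM); apply/memI; exists u, v.
  have [wX _ _] := lw.
  rewrite (descE uX wX) // e_sym (adj_lowest_nbrE vA lw uX) //.
  by rewrite -(cnbr_idx uX ui) -(cnbr_idx wX jw) cnbr_idx_eq.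
Qed.

Lemma adj_qE u v : q u != q v -> ~~ M (q u) (q v) -> e u v = eH (q u) (q v).
Proof.
move=> quv nM; have [uX|uA] := boolP (u \in X); have [vX|vA] := boolP (v \in X).
- have [[i qu ui] [j qv vj]] := (q_X uX, q_X vX).
  move: quv; rewrite qu qv (inj_eq xH_inj) => ij.
  by rewrite eH_xH (adj_idx uX vX).
- by apply: adj_X_A; rewrite ?inA.
- by rewrite e_sym eH_sym adj_X_A ?inA // match_sym.
- rewrite -inA in uA; rewrite -inA in vA; have uv : u != v by apply: contraNneq quv => ->.
  by rewrite (clique_adj Acl) ?(clique_adj AH_clique) ?q_AH.
Qed.

Lemma augmentation_q : augmentation e eH M q.
Proof.
split=> [u v|u v quv eHq nM|u v quv neHq|b c Mbc].
- exact: fibre_adj.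
- by rewrite adj_qE.
- by rewrite adj_qE //; apply: contra neHq; apply: match_eH.
- have bc : b != c by apply: contraTneq (match_eH Mbc) => ->; rewrite eH_irr.
  exact: graded_cliques (chordal_e (leqnn 4)) (fibre_clique b) (fibre_clique c)
    (disjoint_fibres bc).
Qed.

End Construction.

Theorem theorem2p6 (V : finType) (e : rel V) (X A : {set V}) :
  is_graph e -> C_pair e X A ->
  exists (W : finType) (eH : rel W) (k : nat) (xs : 'I_k -> W) (a0 : W)
         (as_ : 'I_k -> W) (I : {set 'I_k}) (q : V -> W),
    [/\ basic_C_pair eH xs a0 as_,
        acceptable eH xs I &
        augmentation e eH (match_rel xs as_ I) q].
Proof.
move=> [e_sym e_irr] [[AX Acl XC] A_nbr no_common_A_nbr noP6 chordal_e].
exists _, (@eH V e X), (k e X), (@xH V e X), None, (@aH V e X), (I e X), (q e X).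
split; [exact: basic_C_pair_H | exact: (acceptable_I _ _ AX) | exact: (augmentation_q _ _ AX)].
Qed.
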